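(* For integers $b\ge 0$ and $c\ge 2b+1$, $$\mathrm{gf}(2b+1,b,c,0)\big|_{X=Y=1}=2^{2b+1-c}\,q^{b(2b+1)-\frac12(c-1)c}\,\frac{(q^{4b+4};q^4)_{c-2b-1}}{(q^2;q^2)_{c-2b-1}}.$$
   Context: $X,Y,q$ are indeterminates and $(u;p)_n=\prod_{j=0}^{n-1}(1-up^j)$. Lattice paths in $\mathbb Z\times\mathbb Z$ use unit steps right, $(s,t)\to(s+1,t)$, and down, $(s,t)\to(s,t-1)$; a right step from $(s,t)$ has weight $\frac{Xq^{s-2t}+Yq^{2t-s}}{2}$, a down step weight $1$, a path's weight is the product of its step weights, and $\mathrm{gf}(a,b,c,d)$ is the sum of the weights of all paths from $(a,b)$ to $(c,d)$. *)

From HB Require Import structures.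
From mathcomp Require Import all_boot all_order all_algebra.
From mathcomp Require Import fraction.
Set Implicit Arguments. Unset Strict Implicit. Unset Printing Implicit Defensive.
Import Order.TTheory GRing.Theory Num.Theory.
Local Open Scope ring_scope.

Definition qpoch (F : comPzRingType) (u p : F) (n : nat) : F :=
  \prod_(j < n) (1 - u * p ^+ j).

Definition right_w (F : fieldType) (X Y q : F) (s t : int) : F :=
  (X * q ^ (s - 2 * t) + Y * q ^ (2 * t - s)) / 2%:R.

(* Weight of a lattice path starting at (s,t), encoded by its sequence of
   steps: true = right step (s,t)->(s+1,t), false = down step (s,t)->(s,t-1)
   (down steps have weight 1). *)
Fixpoint path_weight (F : fieldType) (X Y q : F) (s t : int) (p : seq bool)
  : F :=
  match p with
  | [::] => 1
  | true :: p' => right_w X Y q s t * path_weight X Y q (s + 1) t p'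
  | false :: p' => path_weight X Y q s (t - 1) p'
  end.

(* gf(a,b,c,d): sum of weights of all right/down lattice paths from (a,b)
   to (c,d).  Such a path consists of exactly c-a right steps and b-d down
   steps in some order (and there is none unless a <= c and d <= b). *)
Definition gf (F : fieldType) (X Y q : F) (a b c d : int) : F :=
  if (a <= c) && (d <= b) then
    \sum_(p : (`|c - a| + `|b - d|)%N.-tuple bool | count id p == `|c - a|%N)
       path_weight X Y q a b p
  else 0.

Definition Qq : fieldType := {fraction {poly rat}}.
Definition qv : Qq := @FracField.tofrac _ ('X : {poly rat}).

From HB Require Import structures.
From mathcomp Require Import all_boot all_order all_algebra fraction zify ring.
Set Implicit Arguments. Unset Strict Implicit. Unset Printing Implicit Defensive.
Import Order.TTheory GRing.Theory Num.Theory.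
Local Open Scope ring_scope.

(* At X = Y = 1 the weight of a right step from (s,t) is
   wt k = (q^k + q^-k)/2 with k = s - 2t, and a right (resp. down) step
   raises this "level" k by 1 (resp. 2).  Hence gf(2b+1,b,c,0) is the
   level-1 sum T(n,m) over all step words with n = c-2b-1 right steps and
   m = b down steps, weighted by their levels.  Splitting off the LAST step
   gives the Pascal-type recurrence
       T(n+1,m) = wt(n+2m+1) T(n,m) + T(n+1,m-1),
   since the last right step of such a word always sits at level n+2m+1.
   We show that the normalised sums N(n,m) = 2^n q^(E(n,m)) (q^2;q^2)_n T(n,m),
   with E(n,m) = n(n+1)/2 + 2nm, satisfy the same recurrence as
   P(n,m) = (q^(4m+4);q^4)_n, so N = P.  This holds over any field with
   q != 0 and 2 != 0; dividing out (which also needs q not to be a root of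
   unity) and matching the exponents in the statement gives the theorem
   for Q(q). *)

Lemma sum_tuple_cons {R : zmodType} {n : nat}
    (P : pred (seq bool)) (f : seq bool -> R) :
  \sum_(t : n.+1.-tuple bool | P t) f t =
  \sum_(t : n.-tuple bool | P (true :: t)) f (true :: t) +
  \sum_(t : n.-tuple bool | P (false :: t)) f (false :: t).
Proof.
rewrite (reindex (fun u : bool * n.-tuple bool => [tuple of u.1 :: u.2])) /=;
  last first.
  exists (fun t : n.+1.-tuple bool => (thead t, (behead_tuple t : n.-tuple bool))).
    by move=> [x t] _; congr pair; apply: val_inj.
  by move=> t _; rewrite [in RHS](tuple_eta t).
rewrite -(pair_big_dep xpredT (fun x (t : n.-tuple bool) => P (x :: t))
           (fun x (t : n.-tuple bool) => f (x :: t))) /=.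
by rewrite big_bool /= addrC.
Qed.

Lemma sum_tuple_rev {R : zmodType} {n : nat}
    (P : pred (seq bool)) (f : seq bool -> R) :
  \sum_(t : n.-tuple bool | P t) f t =
  \sum_(t : n.-tuple bool | P (rev t)) f (rev t).
Proof.
have rev_inj : injective (@rev_tuple n bool).
  by move=> t1 t2 /(congr1 val) /= /(congr1 rev); rewrite !revK => /val_inj.
by rewrite (reindex_inj rev_inj).
Qed.

Lemma sum_tuple_rcons {R : zmodType} {n : nat}
    (P : pred (seq bool)) (f : seq bool -> R) :
  \sum_(t : n.+1.-tuple bool | P t) f t =
  \sum_(t : n.-tuple bool | P (rcons t true)) f (rcons t true) +
  \sum_(t : n.-tuple bool | P (rcons t false)) f (rcons t false).
Proof.
rewrite (sum_tuple_rev P f).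
rewrite (sum_tuple_cons (fun s => P (rev s)) (fun s => f (rev s))) /=.
rewrite (sum_tuple_rev (fun s => P (rcons s true)) (fun s => f (rcons s true))).
rewrite (sum_tuple_rev (fun s => P (rcons s false)) (fun s => f (rcons s false))).
by congr (_ + _); apply: eq_big => t; rewrite rev_cons.
Qed.

Fixpoint tri (n : nat) : nat := if n is n'.+1 then (tri n' + n)%N else 0%N.
Definition E (n m : nat) : nat := (tri n + 2 * n * m)%N.

Lemma tri_double n : (tri n * 2 = n * n.+1)%N.
Proof. by elim: n => //= n IH; nia. Qed.

Lemma exponent_split b n :
  (((n + 2 * b + 1).-1 * (n + 2 * b + 1)) %/ 2 = b * (2 * b + 1) + E n b)%N.
Proof.
have -> : ((n + 2 * b + 1).-1 * (n + 2 * b + 1) =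
    (b * (2 * b + 1) + E n b) * 2)%N.
  by rewrite addn1 /= /E !mulnDl tri_double; ring.
by rewrite mulnK.
Qed.

Section LevelSums.

Variables (F : fieldType) (q : F).

Definition wt (k : int) : F := (q ^ k + q ^ (- k)) / 2%:R.

Fixpoint level_weight (k : int) (p : seq bool) : F :=
  match p with
  | [::] => 1
  | true :: p' => wt k * level_weight (k + 1) p'
  | false :: p' => level_weight (k + 2) p'
  end.

Lemma path_weight_level s t p :
  path_weight 1 1 q s t p = level_weight (s - 2 * t) p.
Proof.
elim: p s t => [|[] p IH] s t //=; rewrite IH.
  by rewrite /right_w /wt !mul1r opprB; congr (_ * level_weight _ _); ring.
by congr level_weight; ring.
Qed.

(* A word with r right and d down steps started at level k ends at level
   k + r + 2d; this is where an appended right step is taken. *)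
Lemma level_weight_rcons k p x : level_weight k (rcons p x) =
  level_weight k p *
  (if x then wt (k + (count id p)%:Z + 2 * (count negb p)%:Z) else 1).
Proof.
elim: p k => [|[] p IH] k /=.
- by case: x; rewrite /= ?mulr0 ?addr0 ?mul1r ?mulr1.
- by rewrite IH mulrA; case: x {IH} => //; congr (_ * wt _); lia.
- by rewrite IH; case: x {IH} => //; congr (_ * wt _); lia.
Qed.

Definition level_sum (k : int) (n r : nat) : F :=
  \sum_(t : n.-tuple bool | count id t == r) level_weight k t.

Lemma level_sum_gt k n r : (n < r)%N -> level_sum k n r = 0.
Proof.
move=> lt_nr; apply: big1 => t /eqP count_t.
by have := count_size id t; rewrite size_tuple count_t; lia.
Qed.

Lemma level_sum0 k n : level_sum k n 0 = 1.
Proof.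
elim: n => [|n IH].
  by rewrite /level_sum (big_pred1 [tuple]) // => t; rewrite tuple0.
rewrite /level_sum (sum_tuple_rcons (fun s => count id s == 0%N)) /=.
rewrite big_pred0 => [|t]; last by rewrite -cats1 count_cat addn1.
rewrite add0r -[RHS]IH; apply: eq_big => [t|t _].
  by rewrite -cats1 count_cat addn0.
by rewrite level_weight_rcons mulr1.
Qed.

Lemma level_sum_rec k n r : (r <= n)%N ->
  level_sum k n.+1 r.+1 =
  wt (k + r%:Z + 2 * (n - r)%N%:Z) * level_sum k n r + level_sum k n r.+1.
Proof.
move=> le_rn; rewrite /level_sum (sum_tuple_rcons (fun s => count id s == r.+1)).
rewrite mulr_sumr; congr (_ + _); apply: eq_big => t.
- by rewrite -cats1 count_cat addn1.
- rewrite -cats1 count_cat /= addn1 eqSS => /eqP count_t.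
  have count_neg : count negb t = (n - r)%N.
    have := count_predC id t; rewrite size_tuple count_t.
    by rewrite (@eq_count _ (predC id) negb) //; lia.
  by rewrite cats1 level_weight_rcons count_t count_neg mulrC.
- by rewrite -cats1 count_cat addn0.
- by rewrite level_weight_rcons mulr1.
Qed.

Lemma gf_level_sum (a b c : nat) : (a <= c)%N ->
  gf 1 1 q a%:Z b%:Z c%:Z 0 = level_sum (a%:Z - 2 * b%:Z) (c - a + b) (c - a).
Proof.
move=> le_ac; rewrite /gf ifT; last by apply/andP; split; lia.
have -> : `|c%:Z - a%:Z|%N = (c - a)%N by lia.
have -> : `|b%:Z - 0|%N = b by lia.
by apply: eq_bigr => p _; rewrite path_weight_level.
Qed.

Definition denom (n : nat) : F := qpoch (q ^+ 2) (q ^+ 2) n.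
Definition numer (n m : nat) : F := qpoch (q ^+ (4 * m + 4)) (q ^+ 4) n.

Lemma denom_S n : denom n.+1 = denom n * (1 - q ^+ (2 * n.+1)).
Proof.
rewrite /denom /qpoch big_ord_recr /= -!exprM -exprD.
by congr (_ * (1 - _ ^+ _)); lia.
Qed.

Lemma numer_S n m : numer n.+1 m = numer n m * (1 - q ^+ (4 * n + 4 * m + 4)).
Proof.
rewrite /numer /qpoch big_ord_recr /= -!exprM -exprD.
by congr (_ * (1 - _ ^+ _)); lia.
Qed.

Lemma numer_Sl n m : numer n.+1 m = (1 - q ^+ (4 * m + 4)) * numer n m.+1.
Proof.
rewrite /numer /qpoch big_ord_recl /= expr0 mulr1; congr (_ * _).
apply: eq_bigr => j _; rewrite -!exprM -!exprD /bump /=.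
by congr (1 - _ ^+ _); lia.
Qed.

Hypotheses (q_neq0 : q != 0) (two_neq0 : (2%:R : F) != 0).

Lemma wt_nat m : 2%:R * q ^+ m * wt m%:Z = q ^+ (2 * m) + 1.
Proof.
have qm_neq0 : q ^+ m != 0 by rewrite expf_neq0.
by rewrite /wt -exprnN -exprnP mulnC exprM; field; rewrite two_neq0 qm_neq0.
Qed.

Definition nsum (n m : nat) : F :=
  2%:R ^+ n * q ^+ E n m * denom n * level_sum 1 (n + m) n.

Lemma nsum0 m : nsum 0 m = 1.
Proof. by rewrite /nsum level_sum0 /denom /qpoch big_ord0 !mulr1. Qed.

(* The recurrence of level_sum, transported to nsum.  The last term is the
   contribution of words ending with a down step. *)
Lemma nsum_rec n m :
  nsum n.+1 m =
  (1 - q ^+ (2 * n.+1)) * (1 + q ^+ (2 * (n.+1 + 2 * m))) * nsum n m +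
  2%:R ^+ n.+1 * q ^+ E n.+1 m * denom n.+1 * level_sum 1 (n + m) n.+1.
Proof.
rewrite {1}/nsum addSn level_sum_rec ?leq_addr // addKn.
have -> : 1 + n%:Z + 2 * m%:Z = (n.+1 + 2 * m)%N%:Z by lia.
have E_S : q ^+ E n.+1 m = q ^+ E n m * q ^+ (n.+1 + 2 * m).
  by rewrite -exprD /E /=; congr (_ ^+ _); lia.
rewrite E_S denom_S [1 + q ^+ _]addrC -(wt_nat (n.+1 + 2 * m)) /nsum exprS; ring.
Qed.

Lemma nsum_numer n m : nsum n m = numer n m.
Proof.
elim: m n => [|m IHm] n; elim: n => [|n IHn];
  try by rewrite nsum0 /numer /qpoch big_ord0.
- (* m = 0: no word ends with a down step. *)
  rewrite nsum_rec IHn level_sum_gt ?addn0 // mulr0 addr0 numer_S muln0 addn0.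
  have -> : q ^+ (4 * n + 4) = q ^+ (2 * n.+1) * q ^+ (2 * n.+1).
    by rewrite -exprD; congr (_ ^+ _); lia.
  ring.
- (* m > 0: words ending with a down step are counted by nsum n.+1 m. *)
  have down_last : 2%:R ^+ n.+1 * q ^+ E n.+1 m.+1 * denom n.+1 *
      level_sum 1 (n + m.+1) n.+1 = q ^+ (2 * n.+1) * nsum n.+1 m.
    have -> : q ^+ E n.+1 m.+1 = q ^+ (2 * n.+1) * q ^+ E n.+1 m.
      by rewrite -exprD /E; congr (_ ^+ _); lia.
    by rewrite /nsum addnS -addSn; ring.
  rewrite nsum_rec IHn down_last IHm numer_Sl numer_S.
  have -> : q ^+ (2 * (n.+1 + 2 * m.+1)) = q ^+ (2 * n.+1) * q ^+ (4 * m + 4).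
    by rewrite -exprD; congr (_ ^+ _); lia.
  have -> : q ^+ (4 * n + 4 * m.+1 + 4) =
      q ^+ (2 * n.+1) * q ^+ (2 * n.+1) * q ^+ (4 * m + 4).
    by rewrite -!exprD; congr (_ ^+ _); lia.
  ring.
Qed.

Hypothesis q_not_root : forall k, (0 < k)%N -> q ^+ k != 1.

Lemma denom_neq0 n : denom n != 0.
Proof.
apply/prodf_neq0 => j _; rewrite subr_eq0 eq_sym -exprM -exprD.
by apply: q_not_root; rewrite addn_gt0.
Qed.

Lemma level_sum_closed n m :
  level_sum 1 (n + m) n = 2%:R ^- n * q ^- E n m * numer n m / denom n.
Proof.
have := nsum_numer n m; rewrite /nsum => <-.
field; rewrite denom_neq0 !expf_neq0 //.
Qed.

End LevelSums.

Lemma qv_neq0 : qv != 0.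
Proof. by rewrite /qv tofrac_eq0 polyX_eq0. Qed.

Lemma qv_not_root k : (0 < k)%N -> qv ^+ k != 1.
Proof.
move=> k_gt0; rewrite /qv -tofracXn -tofrac1 tofrac_eq.
apply/eqP => /(congr1 (fun p : {poly rat} => size p)).
by rewrite /= size_polyXn size_poly1 => -[k0]; rewrite k0 in k_gt0.
Qed.

Lemma two_neq0_Qq : (2%:R : Qq) != 0.
Proof.
rewrite -(rmorph_nat (@FracField.tofrac _)) tofrac_eq0 -polyC_natr polyC_eq0.
by rewrite pnatr_eq0.
Qed.

Theorem mainTheorem9 (b c : nat) (hc : (2 * b + 1 <= c)%N) :
  gf (1 : Qq) 1 qv (2 * b + 1)%N%:Z b%:Z c%:Z 0 =
  (2%:R : Qq) ^ ((2 * b + 1)%N%:Z - c%:Z)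
  * qv ^ ((b * (2 * b + 1))%N%:Z - ((c.-1 * c) %/ 2)%N%:Z)
  * qpoch (qv ^+ (4 * b + 4)) (qv ^+ 4) (c - (2 * b + 1))
  / qpoch (qv ^+ 2) (qv ^+ 2) (c - (2 * b + 1)).
Proof.
set n := (c - (2 * b + 1))%N.
have c_def : c = (n + 2 * b + 1)%N by rewrite /n; lia.
rewrite gf_level_sum // -/n.
have -> : (2 * b + 1)%N%:Z - 2 * b%:Z = 1 by lia.
rewrite (level_sum_closed qv_neq0 two_neq0_Qq qv_not_root).
rewrite c_def exponent_split.
have -> : (2 * b + 1)%N%:Z - (n + 2 * b + 1)%N%:Z = - n%:Z by lia.
have -> : (b * (2 * b + 1))%N%:Z - (b * (2 * b + 1) + E n b)%N%:Z = - (E n b)%:Z.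
  by lia.
by rewrite -!exprnN.
Qed.
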